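(* Let $A,B\in\mathcal{B}(\mathcal{H})$. Then for every $n\in\mathbb{N}$, \begin{equation*} w\left(\begin{bmatrix} 0 &A \\ B& 0 \end{bmatrix}\right)\geq \sqrt[2n]{\max\{w((AB)^n),w((BA)^n)\}}. \end{equation*}
   Context: $\mathcal{H}$ is a complex Hilbert space and $\mathcal{B}(\mathcal{H})$ is the $C^*$-algebra of all bounded linear operators on $\mathcal{H}$. For $T\in\mathcal{B}(\mathcal{H})$, $w(T)=\sup\{|\langle Tx,x\rangle|:\|x\|=1\}$ is the numerical radius. A $2\times 2$ operator matrix with entries in $\mathcal{B}(\mathcal{H})$ is regarded as an operator on $\mathcal{H}\oplus\mathcal{H}$. *)

From HB Require Import structures.
From mathcomp Require Import all_boot all_order all_algebra.
From mathcomp Require Import complex.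
From mathcomp Require Import classical_sets boolp reals exp.
Set Implicit Arguments. Unset Strict Implicit. Unset Printing Implicit Defensive.
Import Order.TTheory GRing.Theory Num.Theory.
Local Open Scope ring_scope.
Local Open Scope classical_set_scope.

Definition inner_product (R : realType) (H : lmodType R[i]) (ip : H -> H -> R[i]) : Prop :=
  [/\ forall (a : R[i]) (x y z : H), ip (a *: x + y) z = a * ip x z + ip y z,
      forall x y : H, ip y x = conjc (ip x y),
      forall x : H, 0 <= complex.Re (ip x x)
    & forall x : H, ip x x = 0 -> x = 0].

Definition hnorm (R : realType) (V : Type) (ip : V -> V -> R[i]) (x : V) : R :=
  Num.sqrt (complex.Re (ip x x)).

Definition complete_ip (R : realType) (H : lmodType R[i]) (ip : H -> H -> R[i]) : Prop :=
  forall u : nat -> H,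
    (forall e : R, 0 < e -> exists N : nat, forall m n : nat,
        (N <= m)%N -> (N <= n)%N -> hnorm ip (u m - u n) < e) ->
    exists x : H, forall e : R, 0 < e -> exists N : nat, forall n : nat,
        (N <= n)%N -> hnorm ip (u n - x) < e.

Definition bounded_op (R : realType) (H : lmodType R[i]) (ip : H -> H -> R[i])
  (T : H -> H) : Prop :=
  (forall (a : R[i]) (x y : H), T (a *: x + y) = a *: T x + T y) /\
  exists M : R, forall x : H, hnorm ip (T x) <= M * hnorm ip x.

Definition numrad (R : realType) (V : Type) (ip : V -> V -> R[i]) (T : V -> V) : R :=
  sup [set ComplexField.Normc.normc (ip (T x) x) | x in [set x | hnorm ip x = 1]].

Definition ip2 (R : realType) (H : Type) (ip : H -> H -> R[i])
  (p q : H * H) : R[i] := ip p.1 q.1 + ip p.2 q.2.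

(* the operator matrix [[0, A], [B, 0]] acting on H ⊕ H: (x, y) ↦ (A y, B x) *)
Definition offdiag (H : Type) (A B : H -> H) (p : H * H) : H * H := (A p.2, B p.1).

(* Let T = [[0, A], [B, 0]] on H (+) H.  Then T^(2n) acts as (AB)^n on H (+) 0 and
   as (BA)^n on 0 (+) H, so compressing to these summands gives
   max (w((AB)^n), w((BA)^n)) <= w(T^(2n)), and Berger's power inequality
   w(T^k) <= w(T)^k concludes.
   For the power inequality we follow Pearcy: if |z| w(T) <= 1 then I - zT is
   accretive, i.e. Re <(I - zT)y, y> >= 0.  For a primitive k-th root of unity u, the
   vectors y_j = sum_(m<k) (u^j z)^m T^m x satisfy (I - u^j z T) y_j = (I - z^k T^k) x
   and sum_j y_j = k x, so summing over j shows that I - z^k T^k is accretive too;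
   choosing the phase of z so that z^k <T^k x, x> >= 0 and |z| = 1 / w(T) gives
   |<T^k x, x>| <= w(T)^k |x|^2. *)

From HB Require Import structures.
From mathcomp Require Import all_boot all_order all_algebra.
From mathcomp Require Import complex.
From mathcomp Require Import classical_sets boolp reals exp.
From mathcomp Require Import separable cyclotomic cyclic ring lra.
Set Implicit Arguments. Unset Strict Implicit. Unset Printing Implicit Defensive.
Import Order.TTheory GRing.Theory Num.Theory.
Local Open Scope complex_scope.
Local Open Scope ring_scope.

Lemma prim_root_exists (C : numClosedFieldType) n :
  (0 < n)%N -> {z : C | n.-primitive_root z}.
Proof.
pose p : {poly C} := 'X^n - 1; have [r Dp] := closed_field_poly_normal p.
move=> n_gt0; apply/sigW; rewrite (monicP _) ?monicXnsubC // scale1r in Dp.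
have rn1 : all n.-unity_root r by apply/allP=> z; rewrite -root_prod_XsubC -Dp.
have sz_r : (n < (size r).+1)%N.
  by rewrite -(size_prod_XsubC r id) -Dp size_XnsubC.
have [|z] := hasP (has_prim_root n_gt0 rn1 _ sz_r); last by exists z.
by rewrite -separable_prod_XsubC -Dp separable_Xn_sub_1 // pnatr_eq0 -lt0n.
Qed.

Lemma sum_expr_prim_root_eq0 (R : idomainType) k (w : R) m :
  k.-primitive_root w -> (0 < m < k)%N -> \sum_(j < k) (w ^+ m) ^+ j = 0.
Proof.
move=> wk /andP[m_gt0 m_lt_k].
have wm_neq1 : w ^+ m != 1.
  rewrite -(prim_order_dvd wk); apply: contraTN m_lt_k => /(dvdn_leq m_gt0).
  by rewrite -leqNgt.
have : (w ^+ m - 1) * \sum_(j < k) (w ^+ m) ^+ j = 0.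
  by rewrite -subrX1 exprAC (prim_expr_order wk) expr1n subrr.
by move/eqP; rewrite mulf_eq0 subr_eq0 (negPf wm_neq1) => /eqP.
Qed.

(* Averaging a polynomial in [w ^+ j * z] over all [k]-th roots of unity
   [w ^+ j] keeps only its constant coefficient. *)
Lemma prim_root_sum_rotations (R : idomainType) (V : lmodType R) k (w z : R)
    (v : nat -> V) :
  k.-primitive_root w ->
  \sum_(j < k) \sum_(m < k) (w ^+ j * z) ^+ m *: v m = k%:R *: v 0%N.
Proof.
move=> wk; have k_gt0 := prim_order_gt0 wk.
rewrite exchange_big (bigD1 (Ordinal k_gt0)) //= [X in _ + X]big1 => [|m m_neq0].
  rewrite addr0 -scaler_suml.
  by under eq_bigr do rewrite expr0; rewrite sumr_const card_ord scaler_nat.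
have m_gt0 : (0 < m)%N.
  by rewrite lt0n; apply: contraNneq m_neq0 => m0; apply/eqP/val_inj.
under eq_bigr do rewrite exprMn exprAC.
rewrite -scaler_suml -mulr_suml (sum_expr_prim_root_eq0 wk) ?m_gt0 ?ltn_ord //.
by rewrite -scalerA scale0r.
Qed.

Lemma geometric_sum_iter (R : pzRingType) (V : lmodType R) (T : {linear V -> V})
    (zeta : R) k x :
  \sum_(m < k) zeta ^+ m *: iter m T x - zeta *: T (\sum_(m < k) zeta ^+ m *: iter m T x)
  = x - zeta ^+ k *: iter k T x.
Proof.
elim: k => [|k IH]; first by rewrite !big_ord0 linear0 scaler0 subr0 expr0 scale1r subrr.
rewrite !big_ord_recr /= linearD scalerDr opprD addrACA IH (linearZZ T) scalerA -exprS.
by rewrite addrA subrK.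
Qed.

Lemma le0_of_le_pexprM (R : numFieldType) (y a : R) k :
  (0 < k)%N -> 0 <= a -> (forall e, 0 < e -> y <= e ^+ k * a) -> y <= 0.
Proof.
move=> k_gt0 a_ge0 hy; apply/ler_addgt0Pr => e e_gt0; rewrite add0r.
have ea_gt0 : 0 < e + a by rewrite ltr_wpDr.
pose t := e / (e + a).
have t_gt0 : 0 < t by rewrite divr_gt0.
have t_le1 : t <= 1 by rewrite ler_pdivrMr // mul1r lerDl.
apply: (le_trans (hy t t_gt0)); apply: (@le_trans _ _ (t * a)).
  by rewrite ler_wpM2r // ler_iXnr // ltW.
by rewrite /t mulrAC ler_pdivrMr // ler_pM2l // ler_wpDl // ltW.
Qed.

Section InnerProduct.
Variables (C : numClosedFieldType) (V : lmodType C) (ip : V -> V -> C).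
Hypothesis ip_linear : forall z, linear_for *%R (ip ^~ z).
Hypothesis ipC : forall x y, ip y x = (ip x y)^*.
Hypothesis ip_ge0 : forall x, 0 <= ip x x.
Hypothesis ip_def : forall x, ip x x = 0 -> x = 0.

Let ip_l z : {linear V -> C | *%R} :=
  HB.pack (ip ^~ z) (GRing.isLinear.Build _ _ _ _ _ (ip_linear z)).

Lemma ip0l z : ip 0 z = 0. Proof. exact: (raddf0 (ip_l z)). Qed.

Lemma ipZl a x z : ip (a *: x) z = a * ip x z.
Proof. exact: (linearZ_LR (ip_l z)). Qed.

Lemma ipBl x y z : ip (x - y) z = ip x z - ip y z.
Proof. exact: (raddfB (ip_l z)). Qed.

Lemma ip0r z : ip z 0 = 0. Proof. by rewrite ipC ip0l conjC0. Qed.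

Lemma ipZr a x z : ip z (a *: x) = a^* * ip z x.
Proof. by rewrite ipC ipZl rmorphM /= -ipC. Qed.

Lemma ipBr x y z : ip z (x - y) = ip z x - ip z y.
Proof. by rewrite ipC ipBl rmorphB /= -!ipC. Qed.

Lemma ip_sumr I (r : seq I) (P : pred I) (F : I -> V) z :
  ip z (\sum_(i <- r | P i) F i) = \sum_(i <- r | P i) ip z (F i).
Proof.
rewrite ipC; have -> : ip (\sum_(i <- r | P i) F i) z = \sum_(i <- r | P i) ip (F i) z.
  exact: (raddf_sum (ip_l z)).
by rewrite rmorph_sum /=; apply: eq_bigr => i _; rewrite -ipC.
Qed.

Lemma normr_ip_le u v : `|ip u v| *+ 2 <= ip u u + ip v v.
Proof.
set c := ip u v; have [->|c_neq0] := eqVneq c 0.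
  by rewrite normr0 mul0rn addr_ge0.
have nc_neq0 : `|c| != 0 by rewrite normr_eq0.
(* expand [0 <= ip (u - a v) (u - a v)] for the phase [a] of [c] *)
set a := c / `|c|.
have ac : a^* * c = `|c|.
  by rewrite /a fmorph_div /= conj_normC mulrAC -normCKC expr2 mulfK.
have acJ : a * ip v u = `|c|.
  by rewrite ipC -/c /a mulrAC -normCK expr2 mulfK.
have aaJ : a * a^* = 1.
  by rewrite -normCK /a normrM normfV normr_id divff // expr1n.
have := ip_ge0 (u - a *: v).
rewrite !ipBl !ipBr !ipZl !ipZr -/c ac acJ mulrA aaJ mul1r.
have -> : ip u u - `|c| - (`|c| - ip v v) = ip u u + ip v v - `|c| *+ 2 by ring.
by rewrite subr_ge0.
Qed.

Section Operator.
Variable T : {linear V -> V}.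

Lemma Re_ip_subZ_ge0 (W zeta : C) y :
  (forall y, `|ip (T y) y| <= W * ip y y) -> `|zeta| * W <= 1 ->
  0 <= 'Re (ip (y - zeta *: T y) y).
Proof.
move=> hW hzeta; rewrite ipBl ipZl raddfB /= (Creal_ReP _ (ger0_real (ip_ge0 y))).
rewrite subr_ge0; apply: le_trans (leif_Re_Creal _).1 _.
rewrite normrM; apply: (le_trans (ler_wpM2l (normr_ge0 _) (hW y))).
by rewrite mulrA ler_piMl.
Qed.

Lemma Re_ip_sub_iterZ_ge0 (W zeta : C) k x :
  (0 < k)%N -> (forall y, `|ip (T y) y| <= W * ip y y) -> `|zeta| * W <= 1 ->
  0 <= 'Re (ip (x - zeta ^+ k *: iter k T x) x).
Proof.
move=> k_gt0 hW hzeta; have [w wk] := prim_root_exists C k_gt0.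
have w_norm : `|w| = 1.
  by apply/eqP; rewrite -(pexpr_eq1 k_gt0) // -normrX (prim_expr_order wk) normr1.
pose y j := \sum_(m < k) (w ^+ j * zeta) ^+ m *: iter m T x.
have y_resolvent j : y j - (w ^+ j * zeta) *: T (y j) = x - zeta ^+ k *: iter k T x.
  by rewrite geometric_sum_iter exprMn exprAC (prim_expr_order wk) expr1n mul1r.
have sum_y : \sum_(j < k) y j = k%:R *: x.
  by rewrite /y (prim_root_sum_rotations _ (fun m => iter m T x) wk).
have key : k%:R * ip (x - zeta ^+ k *: iter k T x) x =
    \sum_(j < k) ip (y j - (w ^+ j * zeta) *: T (y j)) (y j).
  under [RHS]eq_bigr do rewrite y_resolvent.
  by rewrite -ip_sumr sum_y ipZr conjC_nat.
have : 0 <= 'Re (k%:R * ip (x - zeta ^+ k *: iter k T x) x).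
  rewrite key raddf_sum; apply: sumr_ge0 => j _; apply: (Re_ip_subZ_ge0 _ hW).
  by rewrite normrM normrX w_norm expr1n mul1r.
by rewrite ReMl ?realn // pmulr_rge0 ?ltr0n.
Qed.

Lemma normr_ip_iter_le_pos (W : C) k x :
  0 < W -> (0 < k)%N -> (forall y, `|ip (T y) y| <= W * ip y y) ->
  `|ip (iter k T x) x| <= W ^+ k * ip x x.
Proof.
move=> W_gt0 k_gt0 hW; set c := ip (iter k T x) x.
have [->|c_neq0] := eqVneq c 0; first by rewrite normr0 mulr_ge0 // exprn_ge0 // ltW.
have nc_neq0 : `|c| != 0 by rewrite normr_eq0.
(* [z ^+ k] rotates [c] onto the positive axis and has modulus [W ^- k] *)
set z := k.-root (c^* / `|c|) / W.
have z_norm : `|z| * W <= 1.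
  rewrite normrM normfV norm_rootC normrM normfV norm_conjC normr_id divff //.
  by rewrite rootC1 // mul1r (gtr0_norm W_gt0) mulVf // gt_eqF.
have zc : z ^+ k * c = `|c| / W ^+ k.
  rewrite expr_div_n rootCK // mulrAC [_ / `|c| * c]mulrAC -normCKC expr2.
  by rewrite mulfK.
have := Re_ip_sub_iterZ_ge0 x k_gt0 hW z_norm.
rewrite ipBl ipZl -/c zc.
have b_ge0 : 0 <= `|c| / W ^+ k by rewrite divr_ge0 // exprn_ge0 // ltW.
have real_rhs := realB (ger0_real (ip_ge0 x)) (ger0_real b_ge0).
by rewrite (Creal_ReP _ real_rhs) subr_ge0 ler_pdivrMr ?exprn_gt0 // mulrC.
Qed.

Lemma normr_ip_iter_le (W : C) k x :
  0 <= W -> (0 < k)%N -> (forall y, `|ip (T y) y| <= W * ip y y) ->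
  `|ip (iter k T x) x| <= W ^+ k * ip x x.
Proof.
move=> W_ge0 k_gt0 hW; have [W0|W_neq0] := eqVneq W 0; last first.
  by apply: normr_ip_iter_le_pos; rewrite // lt_def W_neq0.
rewrite W0 expr0n gtn_eqF // mul0r.
apply: (le0_of_le_pexprM k_gt0 (ip_ge0 x)) => e e_gt0.
have hWe y : `|ip (T y) y| <= e * ip y y.
  by apply: le_trans (hW y) _; rewrite W0 mul0r mulr_ge0 // ltW.
exact: normr_ip_iter_le_pos.
Qed.

Lemma normr_ip_le_of_unit (W : C) : 0 <= W ->
  (forall q, ip q q = 1 -> `|ip (T q) q| <= W) ->
  forall p, `|ip (T p) p| <= W * ip p p.
Proof.
move=> W_ge0 hW p; have [/ip_def ->|pp_neq0] := eqVneq (ip p p) 0.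
  by rewrite linear0 ip0l normr0 mulr_ge0.
have pp_gt0 : 0 < ip p p by rewrite lt_def pp_neq0 ip_ge0.
set s := sqrtC (ip p p); have s_gt0 : 0 < s by rewrite sqrtC_gt0.
have sVJ : (s^-1)^* = s^-1 by rewrite geC0_conj // invr_ge0 ltW.
have ss : s * s = ip p p by rewrite -expr2 sqrtCK.
have unit_p : ip (s^-1 *: p) (s^-1 *: p) = 1.
  by rewrite ipZl ipZr sVJ mulrA -invfM ss mulVf.
have := hW _ unit_p; rewrite linearZZ ipZl ipZr sVJ mulrA -invfM ss.
by rewrite normrM normfV (gtr0_norm pp_gt0) ler_pdivrMl // mulrC.
Qed.

End Operator.
End InnerProduct.

Local Notation normc := ComplexField.Normc.normc.

Lemma conjcE (R : rcfType) (x : R[i]) : conjc x = x^*.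
Proof.
have [->|x_neq0] := eqVneq x 0; first by rewrite conjc0 rmorph0.
by apply: (mulfI x_neq0); rewrite -sqr_normc normCK.
Qed.

Lemma normcE (R : rcfType) (z : R[i]) : `|z| = (normc z)%:C.
Proof. by case: z => a b; rewrite normc_def. Qed.

Lemma normc_ge0 (R : rcfType) (z : R[i]) : 0 <= normc z.
Proof. by rewrite -ler0c -normcE. Qed.

Lemma powR_invn_le (R : realType) (x y : R) k :
  (0 < k)%N -> 0 <= x -> 0 <= y -> x <= y ^+ k -> x `^ k%:R^-1 <= y.
Proof.
move=> k_gt0 x_ge0 y_ge0 xy; have kV_ge0 : 0 <= (k%:R : R)^-1 by rewrite invr_ge0.
apply: (le_trans (ge0_ler_powR kV_ge0 x_ge0 _ xy)); first by rewrite nnegrE exprn_ge0.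
by rewrite -powR_mulrn // -powRrM mulfV ?powRr1 // pnatr_eq0 -lt0n.
Qed.

Section NumericalRadius.
Variables (R : realType) (V : Type) (ip : V -> V -> R[i]).
Local Open Scope classical_set_scope.

Lemma numrad_ge0 T : 0 <= numrad ip T.
Proof.
rewrite /numrad; set E := [set _ | _ in _].
have [E_sup|/sup_out -> //] := pselect (has_sup E).
have [_ [x x_unit _]] := E_sup.1.
by apply: le_trans (normc_ge0 (ip (T x) x)) (sup_upper_bound E_sup _); exists x.
Qed.

Lemma numrad_le T b : 0 <= b ->
  (forall x, hnorm ip x = 1 -> normc (ip (T x) x) <= b) -> numrad ip T <= b.
Proof.
move=> b_ge0 hb; rewrite /numrad; set E := [set _ | _ in _].
have [E_neq0|E0] := pselect (E !=set0); first by apply: ge_sup => // _ [x /hb + <-].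
suff -> : E = set0 by rewrite sup0.
by apply/seteqP; split => // y Ey; apply: E0; exists y.
Qed.

Lemma normc_le_numrad_of_ub T b :
  (forall x, hnorm ip x = 1 -> normc (ip (T x) x) <= b) ->
  forall x, hnorm ip x = 1 -> normc (ip (T x) x) <= numrad ip T.
Proof.
move=> hb x x_unit; apply: sup_upper_bound; last by exists x.
by split; [exists (normc (ip (T x) x)); exists x | exists b => _ [y /hb + <-]].
Qed.

End NumericalRadius.

Section ComplexInnerProduct.
Variables (R : realType) (V : lmodType R[i]) (ip : V -> V -> R[i]).
Hypothesis hip : inner_product ip.

Let ip_linear z : linear_for *%R (ip ^~ z).
Proof. by case: hip => lin _ _ _ a x y; apply: lin. Qed.

Let ipC x y : ip y x = (ip x y)^*.
Proof. by case: hip => _ sym _ _; rewrite sym conjcE. Qed.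

Lemma ip_self_hnorm x : ip x x = (hnorm ip x ^+ 2)%:C.
Proof.
case: hip => _ sym Re_ge0 _; rewrite /hnorm sqr_sqrtr //.
by have := sym x x; case: (ip x x) => a b /= [] Im_eq; congr (_ +i* _); lra.
Qed.

Let ip_ge0 x : 0 <= ip x x.
Proof. by rewrite ip_self_hnorm ler0c sqr_ge0. Qed.

Let ip_def x : ip x x = 0 -> x = 0.
Proof. by case: hip => _ _ _; apply. Qed.

Lemma hnorm_eq1 x : hnorm ip x = 1 <-> ip x x = 1.
Proof.
split=> [x_unit|xx1]; first by rewrite ip_self_hnorm x_unit expr1n.
by rewrite /hnorm xx1 /= sqrtr1.
Qed.

Lemma ip2_inl p x : ip2 ip p (x, 0) = ip p.1 x.
Proof. by rewrite /ip2 /= (ip0r ip_linear ipC) addr0. Qed.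

Lemma ip2_inr p x : ip2 ip p (0, x) = ip p.2 x.
Proof. by rewrite /ip2 /= (ip0r ip_linear ipC) add0r. Qed.

Lemma hnorm_ip2 p :
  hnorm (ip2 ip) p = Num.sqrt (hnorm ip p.1 ^+ 2 + hnorm ip p.2 ^+ 2).
Proof. by rewrite {1}/hnorm /ip2 (ip_self_hnorm p.1) (ip_self_hnorm p.2) -rmorphD. Qed.

Lemma inner_product_ip2 : inner_product (ip2 ip).
Proof.
split=> [a [x1 x2] [y1 y2] [z1 z2]|[x1 x2] [y1 y2]|p|[x1 x2]]; rewrite /ip2 /=.
- by rewrite !(ip_linear z1, ip_linear z2) mulrDr addrACA.
- by rewrite conjcE rmorphD /= -!ipC.
- by rewrite (ip_self_hnorm p.1) (ip_self_hnorm p.2) -rmorphD /= addr_ge0 ?sqr_ge0.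
- by move/eqP; rewrite paddr_eq0 // => /andP[/eqP/ip_def -> /eqP/ip_def ->].
Qed.

Lemma hnorm_le_sqr (y z : V) M : hnorm ip y <= M * hnorm ip z ->
  hnorm ip y ^+ 2 <= M ^+ 2 * hnorm ip z ^+ 2.
Proof. by have := sqrtr_ge0 (complex.Re (ip y y)); rewrite -/(hnorm ip y); nra. Qed.

Lemma normc_le_numrad T : bounded_op ip T ->
  forall x, hnorm ip x = 1 -> normc (ip (T x) x) <= numrad ip T.
Proof.
case=> _ [M hM]; apply: (normc_le_numrad_of_ub (b := M ^+ 2 + 1)) => x x_unit.
have := hnorm_le_sqr (hM x); rewrite x_unit expr1n mulr1 => TxM.
have := normr_ip_le ip_linear ipC ip_ge0 (T x) x.
rewrite normcE (ip_self_hnorm (T x)) (ip_self_hnorm x) x_unit expr1n.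
rewrite -rmorphMn -rmorphD lecR; have := normc_ge0 (ip (T x) x); lra.
Qed.

Let linear_of_bounded T (hT : bounded_op ip T) : {linear V -> V} :=
  HB.pack T (GRing.isLinear.Build _ _ _ _ T hT.1).

Lemma normr_ip_le_numrad T : bounded_op ip T ->
  forall x, `|ip (T x) x| <= (numrad ip T)%:C * ip x x.
Proof.
move=> hT; have W_ge0 : 0 <= (numrad ip T)%:C by rewrite ler0c numrad_ge0.
apply: (normr_ip_le_of_unit ip_linear ipC ip_ge0 ip_def (T := linear_of_bounded hT) W_ge0).
by move=> q /hnorm_eq1 q_unit; rewrite normcE lecR normc_le_numrad.
Qed.

Lemma bounded_op_iter T k : bounded_op ip T -> bounded_op ip (iter k T).
Proof.
case=> T_lin [M hM]; elim: k => [|k [IH_lin [N hN]]].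
  by split=> //; exists 1 => x; rewrite mul1r.
split=> [a x y|]; first by rewrite /= IH_lin T_lin.
exists (`|M| * N) => x /=; rewrite -mulrA.
apply: (le_trans (hM _)); apply: (@le_trans _ _ (`|M| * hnorm ip (iter k T x))).
  by apply: ler_wpM2r; [exact: sqrtr_ge0 | exact: ler_norm].
by apply: ler_wpM2l; [exact: normr_ge0 | exact: hN].
Qed.

Lemma numrad_iter_le T k : bounded_op ip T -> (0 < k)%N ->
  numrad ip (iter k T) <= numrad ip T ^+ k.
Proof.
move=> hT k_gt0; apply: numrad_le => [|x /hnorm_eq1 x_unit].
  by rewrite exprn_ge0 ?numrad_ge0.
have W_ge0 : 0 <= (numrad ip T)%:C by rewrite ler0c numrad_ge0.
have := normr_ip_iter_le ip_linear ipC ip_ge0 (T := linear_of_bounded hT) x W_ge0 k_gt0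
  (normr_ip_le_numrad hT).
by rewrite x_unit mulr1 -rmorphXn normcE lecR.
Qed.

Lemma numrad_compress (U : Type) (ipU : U -> U -> R[i]) (X : U -> U) (T : V -> V)
    (J : U -> V) :
  bounded_op ip T -> (forall x, ip (J x) (J x) = ipU x x) ->
  (forall x, ip (T (J x)) (J x) = ipU (X x) x) -> numrad ipU X <= numrad ip T.
Proof.
move=> hT J_isom J_intertwines; apply: numrad_le => [|x x_unit].
  exact: numrad_ge0.
by rewrite -J_intertwines normc_le_numrad // /hnorm J_isom.
Qed.

Lemma bounded_op_offdiag A B :
  bounded_op ip A -> bounded_op ip B -> bounded_op (ip2 ip) (offdiag A B).
Proof.
case=> A_lin [MA hMA] [B_lin [MB hMB]]; split.
  by move=> a [x1 x2] [y1 y2]; rewrite /offdiag /= A_lin B_lin.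
exists (Num.sqrt (MA ^+ 2 + MB ^+ 2)) => p; rewrite !hnorm_ip2 /=.
rewrite -sqrtrM ?addr_ge0 ?sqr_ge0 // ler_sqrt ?mulr_ge0 ?addr_ge0 ?sqr_ge0 //.
have := hnorm_le_sqr (hMA p.2); have := hnorm_le_sqr (hMB p.1).
have := sqr_ge0 (hnorm ip p.1); have := sqr_ge0 (hnorm ip p.2).
have := sqr_ge0 MA; have := sqr_ge0 MB; nra.
Qed.

End ComplexInnerProduct.

Lemma iter_offdiag_double (H : Type) (A B : H -> H) m p :
  iter (2 * m) (offdiag A B) p = (iter m (A \o B) p.1, iter m (B \o A) p.2).
Proof.
elim: m => [|m IH]; first by case: p.
have -> : (2 * m.+1 = (2 * m).+2)%N by rewrite mulnS.
by rewrite /= IH.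
Qed.

Theorem theorem4p7 (R : realType) (H : lmodType R[i]) (ip : H -> H -> R[i])
  (hip : inner_product ip) (hcomplete : complete_ip ip)
  (A B : H -> H) (hA : bounded_op ip A) (hB : bounded_op ip B)
  (n : nat) (hn : (0 < n)%N) :
  (Num.max (numrad ip (iter n (A \o B))) (numrad ip (iter n (B \o A))))
      `^ ((2 * n)%:R^-1) <= numrad (ip2 ip) (offdiag A B).
Proof.
set T := offdiag A B.
have hip2 := inner_product_ip2 hip.
have hT := bounded_op_offdiag hip hA hB.
have hT2n := bounded_op_iter (2 * n) hT.
have two_n_gt0 : (0 < 2 * n)%N by rewrite muln_gt0.
have le_AB : numrad ip (iter n (A \o B)) <= numrad (ip2 ip) (iter (2 * n) T).
  apply: (numrad_compress hip2 (J := fun x => (x, 0))) hT2n _ _ => x.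
    exact: ip2_inl.
  by rewrite ip2_inl // iter_offdiag_double.
have le_BA : numrad ip (iter n (B \o A)) <= numrad (ip2 ip) (iter (2 * n) T).
  apply: (numrad_compress hip2 (J := fun x => (0, x))) hT2n _ _ => x.
    exact: ip2_inr.
  by rewrite ip2_inr // iter_offdiag_double.
have pow_le := numrad_iter_le hip2 hT two_n_gt0.
apply: (powR_invn_le two_n_gt0); first by rewrite le_max numrad_ge0.
  exact: numrad_ge0.
by rewrite ge_max (le_trans le_AB pow_le) (le_trans le_BA pow_le).
Qed.
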